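(* Let $H[A,B]$ be a cubic brace distinct from $\mathbb{C}_4$. Then every pair $(a,b)$ with $a\in A$ and $b\in B$ is $\lambda$-matchable. Consequently, if $H\neq\Theta$ then $\rho(H)=\beta'(H)$.
   Context: Graphs are loopless but may have parallel edges. $\Theta$ has two vertices and three parallel edges; $\mathbb{C}_4$ is the $4$-cycle with every other edge doubled. A brace is a bipartite matching covered graph with no nontrivial tight cut (a cut $C$ is tight if $|C\cap M|=1$ for every perfect matching $M$, trivial if a shore has at most one vertex). For a connected bipartite cubic graph $H[A,B]$, $a\in A$, $b\in B$, an $(a,b)$-matching is a spanning subgraph in which $a,b$ have degree $3$ and all other vertices degree $1$; $(a,b)$ is $\lambda$-matchable if one exists; $\rho(H)$ is the number of $\lambda$-matchable pairs. For a matching covered graph, $\beta'$ is $\sum (n(J)/2)^2$ over all braces $J$ of order at least $6$ in its tight cut decomposition; for a brace $H$ of order at least $6$ this is $(n(H)/2)^2$, and $\beta'(\Theta)=0$. *)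

From mathcomp Require Import all_boot.
Set Implicit Arguments. Unset Strict Implicit. Unset Printing Implicit Defensive.

Section MG.
Variables (V E : finType) (eu ev : E -> V).

Definition loopless := forall e, eu e != ev e.

Definition inc (e : E) (x : V) : bool := (eu e == x) || (ev e == x).

(* degree of x in the spanning subgraph with edge set F (graph loopless) *)
Definition degF (F : {set E}) (x : V) : nat := #|[set e in F | inc e x]|.

Definition cubic := forall x, degF setT x = 3.

(* H[A,B] with B = ~: A: every edge has exactly one end in A *)
Definition bipartite_with (A : {set V}) :=
  forall e, (eu e \in A) != (ev e \in A).

Definition adj (x y : V) : bool :=
  [exists e, ((eu e == x) && (ev e == y)) || ((ev e == x) && (eu e == y))].

Definition connected := forall x y, connect adj x y.

Definition perfect_matching (M : {set E}) := forall x, degF M x = 1.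

Definition matching_covered :=
  [/\ connected, 1 < #|V|, exists M, perfect_matching M &
      forall e, exists M, perfect_matching M /\ e \in M].

Definition cut (X : {set V}) : {set E} :=
  [set e | (eu e \in X) != (ev e \in X)].

Definition tight (C : {set E}) :=
  forall M, perfect_matching M -> #|C :&: M| = 1.

Definition brace (A : {set V}) :=
  [/\ bipartite_with A, matching_covered &
      forall X : {set V}, tight (cut X) -> 2 <= #|X| -> 2 <= #|~: X| -> False].

Definition ab_matching (a b : V) (F : {set E}) : bool :=
  [&& degF F a == 3, degF F b == 3 &
      [forall x, (x != a) && (x != b) ==> (degF F x == 1)]].

Definition lambda_matchable (a b : V) : bool := [exists F, ab_matching a b F].

Definition rho (A : {set V}) : nat :=
  #|[set p : V * V | [&& p.1 \in A, p.2 \notin A & lambda_matchable p.1 p.2]]|.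

(* beta'(H) for a brace H: its tight cut decomposition is H itself, so
   beta'(H) = (n(H)/2)^2 if n(H) >= 6, and 0 otherwise. *)
Definition beta_prime_brace : nat :=
  if 6 <= #|V| then (#|V| %/ 2) ^ 2 else 0.
End MG.

Definition mg_iso (V E : finType) (eu ev : E -> V)
  (V' E' : finType) (eu' ev' : E' -> V') :=
  exists (fV : V -> V') (fE : E -> E'), [/\ bijective fV, bijective fE &
    forall e, ((eu' (fE e) == fV (eu e)) && (ev' (fE e) == fV (ev e))) ||
              ((eu' (fE e) == fV (ev e)) && (ev' (fE e) == fV (eu e)))].

Definition Theta_u (e : 'I_3) : 'I_2 := inord 0.
Definition Theta_v (e : 'I_3) : 'I_2 := inord 1.

(* C4: 4-cycle 0-1-2-3-0 with edges 01 and 23 doubled (every other edge) *)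
Definition C4_u (e : 'I_6) : 'I_4 := inord (nth 0 [:: 0; 0; 1; 2; 2; 3] e).
Definition C4_v (e : 'I_6) : 'I_4 := inord (nth 0 [:: 1; 1; 2; 3; 3; 0] e).

Definition is_Theta (V E : finType) (eu ev : E -> V) := mg_iso eu ev Theta_u Theta_v.
Definition is_C4 (V E : finType) (eu ev : E -> V) := mg_iso eu ev C4_u C4_v.

From Pilot Require Import Defs.
From mathcomp Require Import all_boot zify.
Set Implicit Arguments. Unset Strict Implicit. Unset Printing Implicit Defensive.

(* In a brace H[A,B], a nonempty S ⊂ A with |S| <= |A| - 2 has |N(S)| >= |S| + 2:
   otherwise S together with |S| + 1 vertices of B containing N(S) is the shore of a
   nontrivial tight cut. For singletons this shows that a cubic brace with |A| >= 3
   has no parallel edges. Given a ∈ A and b ∈ B, Hall's theorem (whose condition is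
   the surplus property applied to a ∪ S) matches A - a - N(b) perfectly into
   B - b - N(a); adding all edges at a and at b gives an (a,b)-matching. When
   |A| <= 2 the brace is Θ, where the whole graph is an (a,b)-matching, or, by
   connectivity, ℂ4. Hence ρ(H) = |A||B| = (n/2)^2 = β'(H). *)

Lemma set_of_card_between (T : finType) (N B : {set T}) n :
  N \subset B -> #|N| <= n <= #|B| ->
  exists C : {set T}, [/\ N \subset C, C \subset B & #|C| = n].
Proof.
move=> sNB /andP[leNn lenB].
have : n - #|N| <= #|B :\: N| by rewrite cardsD (setIidPr sNB); lia.
case/card_geqP=> s [uniq_s size_s sBN_s].
have sBN : [set x in s] \subset B :\: N by apply/subsetP=> x; rewrite inE => /sBN_s.
exists (N :|: [set x in s]); split; first exact: subsetUl.
  by rewrite subUset sNB (subset_trans sBN) ?subsetDl.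
have disj : N :&: [set x in s] = set0.
  apply/setP=> x; rewrite !inE; apply/andP=> -[xN xs].
  by move: (sBN_s x xs); rewrite inE xN.
by rewrite cardsU disj cards0 subn0 cardsE (card_uniqP uniq_s) size_s subnKC.
Qed.

Section HallMarriage.
Variables (T : finType) (r : rel T).

Definition nbhd (S : {set T}) := [set y | [exists x in S, r x y]].

Definition hall_condition (X Y : {set T}) :=
  forall S : {set T}, S \subset X -> #|S| <= #|nbhd S :&: Y|.

Definition matching_into (X Y : {set T}) (f : T -> T) :=
  {in X, forall x, f x \in Y /\ r x (f x)} /\ {in X &, injective f}.

Lemma nbhdP (S : {set T}) y : reflect (exists2 x, x \in S & r x y) (y \in nbhd S).
Proof. by rewrite inE; apply: (iffP exists_inP). Qed.

Lemma nbhd1 x : nbhd [set x] = [set y | r x y].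
Proof.
apply/setP=> y; rewrite inE; apply/nbhdP/idP => [[x' /set1P -> //]|rxy].
by exists x; rewrite ?set11.
Qed.

Lemma nbhdU (S1 S2 : {set T}) : nbhd (S1 :|: S2) = nbhd S1 :|: nbhd S2.
Proof.
apply/setP=> y; rewrite in_setU; apply/nbhdP/orP => [[x /setUP[] xS rxy]|].
- by left; apply/nbhdP; exists x.
- by right; apply/nbhdP; exists x.
by case=> /nbhdP[x xS rxy]; exists x; rewrite // inE xS ?orbT.
Qed.

Lemma matching_into_glue (X X1 Y Y1 : {set T}) f1 f2 :
    Y1 \subset Y -> matching_into X1 Y1 f1 -> matching_into (X :\: X1) (Y :\: Y1) f2 ->
  matching_into X Y (fun x => if x \in X1 then f1 x else f2 x).
Proof.
move=> sY1Y [f1P f1I] [f2P f2I].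
have f2X x : x \in X -> x \notin X1 -> f2 x \in Y :\: Y1 /\ r x (f2 x).
  by move=> xX xX1; apply: f2P; rewrite inE xX1.
split=> [x xX|x x' xX x'X].
  case: ifPn => [/f1P[/(subsetP sY1Y)] //|/(f2X x xX)[/setDP[]]] //.
case: ifPn => xX1; case: ifPn => x'X1.
- exact: f1I.
- by have [/setDP[_ /negP]] := f2X _ x'X x'X1 => + _ fE; rewrite -fE; case/f1P: xX1.
- by have [/setDP[_ /negP]] := f2X _ xX xX1 => + _ fE; rewrite fE; case/f1P: x'X1.
- by apply: f2I; rewrite inE ?xX1 ?x'X1.
Qed.

Lemma matching_into_onto (X Y : {set T}) f :
  matching_into X Y f -> #|X| = #|Y| -> f @: X = Y.
Proof.
move=> [fXY f_inj] cardXY; apply/eqP; rewrite eqEcard card_in_imset // cardXY leqnn andbT.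
by apply/subsetP=> _ /imsetP[x xX ->]; case: (fXY x xX).
Qed.

Lemma hall_condition_critical (X Y S0 : {set T}) :
    S0 \subset X -> hall_condition X Y -> #|nbhd S0 :&: Y| <= #|S0| ->
  hall_condition (X :\: S0) (Y :\: (nbhd S0 :&: Y)).
Proof.
move=> sS0X hallXY critS0 S sSX.
have SS0 : S :&: S0 = set0.
  apply/setP=> x; rewrite !inE.
  by case: (boolP (x \in S)) => // /(subsetP sSX)/setDP[_ /negbTE ->].
have := hallXY (S :|: S0); rewrite cardsU SS0 cards0 subn0.
have sSS0X : S :|: S0 \subset X by rewrite subUset sS0X (subset_trans sSX) ?subsetDl.
move=> /(_ sSS0X); rewrite nbhdU setIUl => le.
set N0 := nbhd S0 :&: Y in le critS0 *.
have sub : nbhd S :&: Y :|: N0 \subset nbhd S :&: (Y :\: N0) :|: N0.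
  apply/subsetP=> y; rewrite !(in_setU, in_setI, in_setD).
  by case: (y \in nbhd S0); case: (y \in nbhd S); case: (y \in Y).
move: le (leq_trans (subset_leq_card sub) (leq_card_setU _ _)); lia.
Qed.

Lemma hall_condition_surplus (X Y : {set T}) x0 y0 :
    x0 \in X ->
    (forall S : {set T}, S \subset X -> S != set0 -> S != X -> #|S| < #|nbhd S :&: Y|) ->
  hall_condition (X :\ x0) (Y :\ y0).
Proof.
move=> x0X surplus S sSX.
have [->|S0] := eqVneq S set0; first by rewrite cards0.
have x0S : x0 \notin S by apply/negP=> /(subsetP sSX); rewrite setD11.
have SX : S != X by apply: contraNneq x0S => ->.
have sSX' : S \subset X by apply: subset_trans sSX (subsetDl _ _).
have sub : nbhd S :&: Y \subset y0 |: nbhd S :&: (Y :\ y0).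
  by apply/subsetP=> y; rewrite !inE; case: eqP.
have := leq_trans (surplus S sSX' S0 SX) (subset_leq_card sub).
by rewrite cardsU1; have := leq_b1 (y0 \notin nbhd S :&: (Y :\ y0)); lia.
Qed.

Lemma hall_marriage (X Y : {set T}) : hall_condition X Y -> exists f, matching_into X Y f.
Proof.
move: {2}#|X|.+1 (ltnSn #|X|) => n; elim: n X Y => // n IH X Y ltXn hallXY.
have [->|/set0Pn[x0 x0X]] := eqVneq X set0; first by exists id; split=> x; rewrite inE.
have IHsub (X' Y' : {set T}) :
    X' \proper X -> hall_condition X' Y' -> exists f, matching_into X' Y' f.
  by move=> /proper_card ltX'X; apply: IH; apply: leq_trans ltX'X _.
have [S0 /and4P[sS0X S0n0 S0nX critS0]|] :=
  pickP [pred S0 : {set T} |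
    [&& S0 \subset X, S0 != set0, S0 != X & #|nbhd S0 :&: Y| <= #|S0|]].
  have [f1 [f1P f1I]] : exists f, matching_into S0 Y f.
    apply: IHsub; first by rewrite properEneq S0nX.
    by move=> S sSS0; apply: hallXY (subset_trans sSS0 sS0X).
  have [f2 f2M] : exists f, matching_into (X :\: S0) (Y :\: (nbhd S0 :&: Y)) f.
    apply: IHsub; last exact: hall_condition_critical.
    rewrite properEneq subsetDl andbT; apply: contraNneq S0n0.
    by move=> /setDidPl/disjoint_setI0; rewrite (setIidPr sS0X) => ->.
  exists (fun x => if x \in S0 then f1 x else f2 x).
  apply: matching_into_glue f2M; first exact: subsetIr.
  split=> [x xS0|//]; have [f1Y rf1] := f1P x xS0.
  by rewrite in_setI f1Y andbT; split=> //; apply/nbhdP; exists x.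
move=> noncrit.
have surplus (S : {set T}) :
    S \subset X -> S != set0 -> S != X -> #|S| < #|nbhd S :&: Y|.
  by move=> sSX Sn0 SnX; have := noncrit S; rewrite /= sSX Sn0 SnX /= ltnNge => ->.
have : 0 < #|nbhd [set x0] :&: Y| by apply: leq_trans (hallXY _ _); rewrite ?cards1 ?sub1set.
rewrite card_gt0 => /set0Pn[y0 /setIP[]]; rewrite nbhd1 inE => rx0y0 y0Y.
have [f2 f2M] : exists f, matching_into (X :\ x0) (Y :\ y0) f.
  apply: IHsub; last exact: hall_condition_surplus.
  by rewrite properD1.
exists (fun x => if x \in [set x0] then y0 else f2 x).
apply: matching_into_glue f2M; first by rewrite sub1set.
by split=> [x /set1P ->|x x' /set1P -> /set1P ->]; rewrite ?set11.
Qed.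

End HallMarriage.

Section Ends.
Variables (V E : finType) (eu ev : E -> V).

Definition ends (e : E) (x y : V) :=
  ((eu e == x) && (ev e == y)) || ((ev e == x) && (eu e == y)).

Lemma ends_sym e x y : ends e x y = ends e y x.
Proof. by rewrite /ends orbC andbC [(ev e == y) && _]andbC. Qed.

Lemma adjP x y : reflect (exists e, ends e x y) (adj eu ev x y).
Proof. exact: existsP. Qed.

Lemma adj_sym x y : adj eu ev x y = adj eu ev y x.
Proof. by apply/adjP/adjP=> -[e]; exists e; rewrite ends_sym. Qed.

Definition edges_at x := [set e | inc eu ev e x].

Lemma card_edges_at x : cubic eu ev -> #|edges_at x| = 3.
Proof. by move/(_ x) <-; apply: eq_card => e; rewrite !inE. Qed.

End Ends.

Lemma mg_iso_of_cancel (V E V' E' : finType) (eu ev : E -> V) (eu' ev' : E' -> V')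
    (gV : V' -> V) (fV : V -> V') (gE : E' -> E) (fE : E -> E') :
    cancel gV fV -> cancel gE fE -> #|V| = #|V'| -> #|E| = #|E'| ->
    (forall i, ends eu ev (gE i) (gV (eu' i)) (gV (ev' i))) ->
  mg_iso eu ev eu' ev'.
Proof.
move=> gVK gEK cardV cardE gE_ends.
have fVK : cancel fV gV.
  by apply/(bij_can_sym (inj_card_bij (can_inj gVK) _)); rewrite ?cardV.
have fEK : cancel fE gE.
  by apply/(bij_can_sym (inj_card_bij (can_inj gEK) _)); rewrite ?cardE.
exists fV, fE; split; [by exists gV | by exists gE |].
move=> e; rewrite -[e]fEK; move: (fE e) => i; rewrite gEK.
by rewrite !(eq_sym _ (fV _)) !(can2_eq fVK gVK); apply: gE_ends.
Qed.

Section Bipartite.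
Variables (V E : finType) (eu ev : E -> V) (A : {set V}).
Hypothesis bipA : bipartite_with eu ev A.
Local Notation degF := (degF eu ev).
Local Notation inc := (inc eu ev).
Local Notation adj := (adj eu ev).
Local Notation ends := (ends eu ev).

Definition endA e := if eu e \in A then eu e else ev e.
Definition endB e := if eu e \in A then ev e else eu e.

Lemma endA_in e : endA e \in A.
Proof. by rewrite /endA; case: ifP => // euA; have := bipA e; rewrite euA; case: (ev e \in A). Qed.

Lemma endB_notin e : endB e \notin A.
Proof. by rewrite /endB; case: ifP => // euA; have := bipA e; rewrite euA; case: (ev e \in A). Qed.

Lemma ends_endAB e : ends e (endA e) (endB e).
Proof. by rewrite /ends /endA /endB; case: ifP; rewrite !eqxx ?orbT. Qed.

Lemma incE e x : inc e x = (endA e == x) || (endB e == x).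
Proof. by rewrite /Defs.inc /endA /endB; case: ifP => // _; rewrite orbC. Qed.

Lemma inc_endA e x : x \in A -> inc e x = (endA e == x).
Proof.
move=> xA; rewrite incE; case: (eqVneq (endB e) x) => [eBx|]; last by rewrite orbF.
by move: (endB_notin e); rewrite eBx xA.
Qed.

Lemma inc_endB e x : x \notin A -> inc e x = (endB e == x).
Proof.
move=> xB; rewrite incE; case: (eqVneq (endA e) x) => [eAx|] //.
by move: (endA_in e); rewrite eAx (negbTE xB).
Qed.

Lemma adj_sides x y : adj x y -> (x \in A) != (y \in A).
Proof. by case/adjP=> e /orP[]/andP[/eqP <- /eqP <-]; rewrite ?bipA // eq_sym bipA. Qed.

Lemma nbr_notin x : x \in A -> [set y | adj x y] \subset ~: A.
Proof.
by move=> xA; apply/subsetP=> y; rewrite !inE => /adj_sides; rewrite xA; case: (y \in A).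
Qed.

Lemma nbr_in y : y \notin A -> [set x | adj y x] \subset A.
Proof.
by move=> yB; apply/subsetP=> x; rewrite inE => /adj_sides; rewrite (negbTE yB); case: (x \in A).
Qed.

Lemma adj_endAB x y : x \in A -> adj x y = [exists e, (endA e == x) && (endB e == y)].
Proof.
move=> xA; apply/adjP/existsP => -[e]; last first.
  by move=> /andP[/eqP <- /eqP <-]; exists e; apply: ends_endAB.
rewrite /ends /endA /endB; case/orP=> /andP[/eqP e1 /eqP e2]; exists e.
  by rewrite e1 e2 xA !eqxx.
by move: (bipA e); rewrite e1 e2 xA; case: (y \in A) => // _; rewrite !eqxx.
Qed.

Lemma card_edges_endA (F : {set E}) (S : {set V}) : S \subset A ->
  #|[set e in F | endA e \in S]| = \sum_(x in S) degF F x.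
Proof.
move=> SA; rewrite -sum1dep_card (partition_big endA (mem S)) /=; last by move=> e /andP[].
apply: eq_bigr => x xS; rewrite /Defs.degF -sum1dep_card; apply: eq_bigl => e.
by rewrite inc_endA ?(subsetP SA) //; case: eqP => [->|]; rewrite ?xS ?andbT ?andbF.
Qed.

Lemma card_edges_endB (F : {set E}) (S : {set V}) : S \subset ~: A ->
  #|[set e in F | endB e \in S]| = \sum_(x in S) degF F x.
Proof.
move=> SB; rewrite -sum1dep_card (partition_big endB (mem S)) /=; last by move=> e /andP[].
apply: eq_bigr => x xS; have := subsetP SB x xS; rewrite inE => xB.
rewrite /Defs.degF -sum1dep_card; apply: eq_bigl => e.
by rewrite inc_endB //; case: eqP => [->|]; rewrite ?xS ?andbT ?andbF.
Qed.

Section PerfectMatching.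
Variable M : {set E}.
Hypothesis pmM : perfect_matching eu ev M.

Lemma pm_card_endA (S : {set V}) : S \subset A -> #|[set e in M | endA e \in S]| = #|S|.
Proof. by move=> SA; rewrite card_edges_endA // (eq_bigr (fun _ => 1)) ?sum1_card. Qed.

Lemma pm_card_endB (S : {set V}) : S \subset ~: A -> #|[set e in M | endB e \in S]| = #|S|.
Proof. by move=> SB; rewrite card_edges_endB // (eq_bigr (fun _ => 1)) ?sum1_card. Qed.

Lemma pm_balanced : #|~: A| = #|A|.
Proof.
rewrite -(pm_card_endA (subxx A)) -(pm_card_endB (subxx (~: A))); apply: eq_card => e.
by rewrite !inE endA_in endB_notin.
Qed.

End PerfectMatching.

Lemma cut_endAB (X : {set V}) e : (e \in cut eu ev X) = ((endA e \in X) != (endB e \in X)).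
Proof. by rewrite inE /endA /endB; case: ifP => _ //; rewrite eq_sym. Qed.

Lemma tight_cut_deficient (S T : {set V}) : S \subset A -> T \subset ~: A ->
  nbhd adj S \subset T -> #|T| = #|S|.+1 -> tight eu ev (cut eu ev (S :|: T)).
Proof.
move=> SA TB sNT cardT M pmM.
set MS := [set e in M | endA e \in S]; set MT := [set e in M | endB e \in T].
have sMS_MT : MS \subset MT.
  apply/subsetP=> e; rewrite !inE => /andP[-> eS]; apply: (subsetP sNT); apply/nbhdP.
  by exists (endA e) => //; apply/adjP; exists e; apply: ends_endAB.
have -> : cut eu ev (S :|: T) :&: M = MT :\: MS.
  apply/setP=> e; rewrite in_setI cut_endAB !in_setU.
  have -> : endA e \in T = false by apply/negbTE/negP=> /(subsetP TB); rewrite inE endA_in.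
  have -> : endB e \in S = false by apply/negbTE/negP=> /(subsetP SA); apply/negP/endB_notin.
  move: (subsetP sMS_MT e); rewrite !inE /= !orbF => /implyP.
  by case: (e \in M); case: (endA e \in S); case: (endB e \in T).
by rewrite cardsD (setIidPr sMS_MT) pm_card_endA // pm_card_endB // cardT subSnn.
Qed.

Lemma nbhd_notin (S : {set V}) : S \subset A -> nbhd adj S \subset ~: A.
Proof.
move=> SA; apply/subsetP=> y /nbhdP[x /(subsetP SA) xA adjxy].
by apply: (subsetP (nbr_notin xA)); rewrite inE.
Qed.

Section NoNontrivialTightCut.
Hypothesis tight_free :
  forall X : {set V}, tight eu ev (cut eu ev X) -> 2 <= #|X| -> 2 <= #|~: X| -> False.
Hypothesis balanced : #|~: A| = #|A|.

Lemma brace_nbhd_surplus (S : {set V}) :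
  S \subset A -> 0 < #|S| -> #|S| + 2 <= #|A| -> #|S| + 2 <= #|nbhd adj S|.
Proof.
move=> SA S_gt0 S_small; rewrite leqNgt; apply/negP => deficient.
have [T [sNT TB cardT]] : exists T : {set V},
    [/\ nbhd adj S \subset T, T \subset ~: A & #|T| = #|S|.+1].
  apply: set_of_card_between; first exact: nbhd_notin.
  by rewrite balanced; apply/andP; split; lia.
have ST : S :&: T = set0.
  apply/setP=> x; rewrite !inE; apply/andP=> -[/(subsetP SA) xA /(subsetP TB)].
  by rewrite inE xA.
apply: (tight_free (tight_cut_deficient SA TB sNT cardT)).
  by rewrite cardsU ST cards0 cardT; lia.
have := cardsC (S :|: T); have := cardsC A.
by rewrite cardsU ST cards0 cardT balanced; lia.
Qed.

Hypothesis cubicG : cubic eu ev.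
Hypothesis A_large : 3 <= #|A|.
Local Notation edges_at := (edges_at eu ev).

Lemma nbr_endB x : x \in A -> [set y | adj x y] = endB @: edges_at x.
Proof.
move=> xA; apply/setP=> y; rewrite inE adj_endAB //; apply/existsP/imsetP => -[e].
  by move=> /andP[eAx /eqP <-]; exists e; rewrite // inE inc_endA.
by rewrite inE inc_endA // => eAx ->; exists e; rewrite eAx eqxx.
Qed.

Lemma endAB_inj e1 e2 : endA e1 = endA e2 -> endB e1 = endB e2 -> e1 = e2.
Proof.
move=> eA eB; have xA := endA_in e1.
have := brace_nbhd_surplus (S := [set endA e1]).
rewrite cards1 sub1set xA nbhd1 nbr_endB // => /(_ isT isT A_large) card_nbr_ge3.
have /imset_injP inj : #|endB @: edges_at (endA e1)| == #|edges_at (endA e1)|.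
  by rewrite eqn_leq leq_imset_card card_edges_at.
by apply: inj; rewrite // inE inc_endA // ?eA eqxx.
Qed.

Lemma degF_endAB_rel_A (R : rel V) x : x \in A ->
  degF [set e | R (endA e) (endB e)] x = #|[set y | adj x y && R x y]|.
Proof.
move=> xA; set Fx := [set e in [set e | R (endA e) (endB e)] | inc e x].
have -> : [set y | adj x y && R x y] = endB @: Fx.
  apply/setP=> y; rewrite inE adj_endAB //; apply/andP/imsetP => [[/existsP[e]]|[e]].
    by case/andP=> /eqP eAx /eqP <- Rxy; exists e; rewrite // !inE inc_endA // eAx Rxy eqxx.
  rewrite !inE inc_endA // => /andP[R_e /eqP eAx] ->; rewrite -eAx R_e.
  by split=> //; apply/existsP; exists e; rewrite !eqxx.
rewrite card_in_imset // => e1 e2.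
rewrite !inE !inc_endA // => /andP[_ /eqP e1x] /andP[_ /eqP e2x].
by apply: endAB_inj; rewrite e1x e2x.
Qed.

Lemma degF_endAB_rel_B (R : rel V) y : y \notin A ->
  degF [set e | R (endA e) (endB e)] y = #|[set x | adj x y && R x y]|.
Proof.
move=> yB; set Fy := [set e in [set e | R (endA e) (endB e)] | inc e y].
have -> : [set x | adj x y && R x y] = endA @: Fy.
  apply/setP=> x; rewrite inE; apply/andP/imsetP => [[]|[e]].
    move=> adjxy; have xA : x \in A by apply: (subsetP (nbr_in yB)); rewrite inE adj_sym.
    move: adjxy; rewrite adj_endAB // => /existsP[e /andP[/eqP <- /eqP eBy]] R_e.
    by exists e; rewrite // !inE inc_endB // eBy R_e eqxx.
  rewrite !inE inc_endB // => /andP[R_e /eqP eBy] ->; rewrite -eBy R_e.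
  by split=> //; rewrite adj_endAB ?endA_in //; apply/existsP; exists e; rewrite !eqxx.
rewrite card_in_imset // => e1 e2.
rewrite !inE !inc_endB // => /andP[_ /eqP e1y] /andP[_ /eqP e2y].
by move=> eA; apply: endAB_inj; rewrite // e1y e2y.
Qed.

Lemma card_nbr x : #|[set y | adj x y]| = 3.
Proof.
rewrite -(cubicG x).
have -> : [set: E] = [set e | (fun _ _ => true) (endA e) (endB e)].
  by apply/setP=> e; rewrite !inE.
case: (boolP (x \in A)) => xA;
  [rewrite (degF_endAB_rel_A (fun _ _ => true)) | rewrite (degF_endAB_rel_B (fun _ _ => true))];
  by [|apply: eq_card => y; rewrite !inE ?andbT // adj_sym].
Qed.

Section LambdaMatching.
Variables a b : V.
Hypotheses (aA : a \in A) (bB : b \notin A).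

Local Notation residualA := (A :\: (a |: [set x | adj b x])).
Local Notation residualB := (~: A :\: (b |: [set y | adj a y])).

Lemma residualA_compl_sub : a |: [set x | adj b x] \subset A.
Proof. by rewrite subUset sub1set aA nbr_in. Qed.

Lemma residualB_compl_sub : b |: [set y | adj a y] \subset ~: A.
Proof. by rewrite subUset sub1set inE bB nbr_notin. Qed.

Lemma hall_residual : hall_condition adj residualA residualB.
Proof.
move=> S sSX.
have aS : a \notin S by apply/negP=> /(subsetP sSX); rewrite !inE eqxx.
have sSA : S \subset A by apply: subset_trans sSX (subsetDl _ _).
have cardX : #|residualA| + 3 <= #|A|.
  rewrite cardsD (setIidPr residualA_compl_sub); have := subset_leq_card residualA_compl_sub.
  by rewrite cardsU1 card_nbr; lia.
have cardS := subset_leq_card sSX.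
have := brace_nbhd_surplus (S := a |: S).
rewrite subUset sub1set aA sSA cardsU1 aS => /(_ isT isT ltac:(lia)) surplus.
have sub : nbhd adj (a |: S) \subset (nbhd adj S :&: residualB) :|: [set y | adj a y].
  rewrite nbhdU nbhd1; apply/subsetP=> y /setUP[ay|/nbhdP[x xS adjxy]].
    by rewrite in_setU ay orbT.
  rewrite in_setU; case: (boolP (adj a y)) => [ay|nay]; first by rewrite inE ay orbT.
  rewrite in_setI; apply/orP; left; apply/andP; split; first by apply/nbhdP; exists x.
  have := subsetP sSX x xS; rewrite !inE negb_or => /andP[/andP[_ nbx] xA].
  have yB : y \notin A by move: (adj_sides adjxy); rewrite xA; case: (y \in A).
  rewrite negb_or nay yB !andbT.
  by apply: contraNneq nbx => eyb; rewrite adj_sym -eyb.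
have := leq_trans (subset_leq_card sub) (leq_card_setU _ _); rewrite card_nbr; lia.
Qed.

Lemma card_residual : #|residualA| = #|residualB|.
Proof.
rewrite !cardsD (setIidPr residualA_compl_sub) (setIidPr residualB_compl_sub).
by rewrite !cardsU1 !card_nbr balanced !inE adj_sym.
Qed.

Definition ab_rel (f : V -> V) : rel V :=
  fun x y => [|| x == a, y == b | (x \in residualA) && (y == f x)].

Section ResidualMatching.
Variable f : V -> V.
Hypothesis fM : matching_into adj residualA residualB f.
Local Notation F := [set e | ab_rel f (endA e) (endB e)].

Lemma degF_ab_rel_A x : x \in A -> x != a -> degF F x = 1.
Proof.
move=> xA xa; rewrite degF_endAB_rel_A //; apply/eqP/cards1P.
case: (boolP (adj b x)) => bx.
  exists b; apply/setP=> y; rewrite !inE /ab_rel !inE (negbTE xa) bx /= orbF.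
  by case: (eqVneq y b) => [->|]; rewrite ?andbF // adj_sym bx.
have xX : x \in residualA by rewrite !inE negb_or xa bx.
have [_ adjxf] := fM.1 x xX.
exists (f x); apply/setP=> y; rewrite !inE /ab_rel (negbTE xa) xX /=.
case: (eqVneq y b) => [->|_] /=.
  rewrite andbT adj_sym (negbTE bx); apply/esym/negbTE.
  by apply: contraNneq bx => ->; rewrite adj_sym.
by case: (eqVneq y (f x)) => [->|]; rewrite ?andbT ?andbF.
Qed.

Lemma degF_ab_rel_B y : y \notin A -> y != b -> degF F y = 1.
Proof.
move=> yB yb; rewrite degF_endAB_rel_B //; apply/eqP/cards1P.
case: (boolP (adj a y)) => ay.
  exists a; apply/setP=> x; rewrite !inE /ab_rel /= (negbTE yb) /=.
  case: (eqVneq x a) => [->|xa] /=; first by rewrite ay.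
  apply/negbTE/andP=> -[_ /andP[xX /eqP yfx]].
  by have [] := fM.1 x xX; rewrite -yfx !inE ay orbT.
have : y \in residualB by rewrite !inE negb_or yb ay yB.
rewrite -(matching_into_onto fM card_residual) => /imsetP[x0 x0X yfx0].
have [_ adjx0] := fM.1 x0 x0X; rewrite -yfx0 in adjx0.
exists x0; apply/setP=> x; rewrite !inE /ab_rel /= (negbTE yb) /=.
case: (eqVneq x x0) => [->|xx0]; first by rewrite adjx0 x0X yfx0 eqxx orbT.
apply/negbTE/andP=> -[adjx /orP[/eqP xa|/andP[xX /eqP yfx]]].
  by move: ay; rewrite -xa adjx.
by move: xx0; rewrite (fM.2 x0 x x0X xX (etrans (esym yfx0) yfx)) eqxx.
Qed.

Lemma ab_matching_ab_rel : ab_matching eu ev a b F.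
Proof.
apply/and3P; split.
- rewrite degF_endAB_rel_A // -(card_nbr a); apply/eqP/eq_card=> y.
  by rewrite !inE /ab_rel eqxx /= andbT.
- rewrite degF_endAB_rel_B // -(card_nbr b); apply/eqP/eq_card=> x.
  by rewrite !inE /ab_rel eqxx /= orbT andbT adj_sym.
apply/forallP=> x; apply/implyP=> /andP[xa xb]; apply/eqP.
by case: (boolP (x \in A)) => xA; [apply: degF_ab_rel_A | apply: degF_ab_rel_B].
Qed.

End ResidualMatching.

Lemma lambda_matchable_brace : lambda_matchable eu ev a b.
Proof.
have [f fM] := hall_marriage hall_residual.
by apply/existsP; exists [set e | ab_rel f (endA e) (endB e)]; apply: ab_matching_ab_rel.
Qed.

End LambdaMatching.

End NoNontrivialTightCut.

Section SmallBraces.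
Hypothesis cubicG : cubic eu ev.
Local Notation edges_at := (edges_at eu ev).

Lemma lambda_matchable_of_card1 a b : #|A| = 1 -> #|~: A| = 1 ->
  a \in A -> b \notin A -> lambda_matchable eu ev a b.
Proof.
move=> /eqP/cards1P[a' eA] /eqP/cards1P[b' eB] aA bB.
have ab x : (x == a) || (x == b).
  case: (boolP (x \in A)) => [xA|xB].
    by move: aA xA; rewrite eA => /set1P-> /set1P->; rewrite eqxx.
  by move: bB xB; rewrite -!in_setC eB => /set1P-> /set1P->; rewrite eqxx orbT.
apply/existsP; exists setT; rewrite /ab_matching !cubicG !eqxx /=.
by apply/forallP=> x; rewrite -negb_or ab.
Qed.

Lemma is_Theta_of_card1 : #|A| = 1 -> #|~: A| = 1 -> is_Theta eu ev.
Proof.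
move=> /eqP/cards1P[a eA] /eqP/cards1P[b eB].
have endA_a e : endA e = a by apply/set1P; rewrite -eA endA_in.
have endB_b e : endB e = b by apply/set1P; rewrite -eB inE endB_notin.
have cardE : #|E| = 3.
  rewrite -(card_edges_at a cubicG); apply: eq_card => e.
  by rewrite !inE inc_endA ?endA_a ?eqxx // eA set11.
pose gV (i : 'I_2) := if i == 0 :> nat then a else b.
pose fV x : 'I_2 := if x \in A then inord 0 else inord 1.
apply: (@mg_iso_of_cancel _ _ _ _ _ _ _ _ gV fV
  (fun i => enum_val (cast_ord (esym cardE) i)) (fun e => cast_ord cardE (enum_rank e))).
- case=> -[|[|//]] i2; apply: val_inj; rewrite /fV /gV /=.
    by rewrite eA set11 inordK.
  have bB : b \notin A by rewrite -in_setC eB set11.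
  by rewrite (negbTE bB) inordK.
- by move=> i; rewrite enum_valK cast_ordKV.
- by rewrite -(cardsC A) eB eA !cards1 card_ord.
- by rewrite cardE card_ord.
move=> i; rewrite /gV /Theta_u /Theta_v !inordK //=.
by have := ends_endAB (enum_val (cast_ord (esym cardE) i)); rewrite endA_a endB_b.
Qed.

Definition parallel x y := [set e | (endA e == x) && (endB e == y)].

Lemma parallelP e x y : reflect (endA e = x /\ endB e = y) (e \in parallel x y).
Proof. by rewrite inE; apply: (iffP andP) => -[/eqP-> /eqP->]. Qed.

Lemma ends_parallel e x y : e \in parallel x y -> ends e x y.
Proof. by case/parallelP=> <- <-; apply: ends_endAB. Qed.

Lemma card_parallel_row x b1 b2 : x \in A -> ~: A = [set b1; b2] -> b1 != b2 ->
  #|parallel x b1| + #|parallel x b2| = 3.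
Proof.
move=> xA eB b12; rewrite -(card_edges_at x cubicG).
have disj : parallel x b1 :&: parallel x b2 = set0.
  apply/setP=> e; rewrite !inE; case: (eqVneq (endB e) b1) => [->|]; last by rewrite !andbF.
  by rewrite (negbTE b12) !andbF.
have -> : edges_at x = parallel x b1 :|: parallel x b2.
  apply/setP=> e; rewrite !inE inc_endA //.
  by have := endB_notin e; rewrite -in_setC eB !inE; case: (endA e == x).
by rewrite cardsU disj cards0 subn0.
Qed.

Lemma card_parallel_col y a1 a2 : y \notin A -> A = [set a1; a2] -> a1 != a2 ->
  #|parallel a1 y| + #|parallel a2 y| = 3.
Proof.
move=> yB eA a12; rewrite -(card_edges_at y cubicG).
have disj : parallel a1 y :&: parallel a2 y = set0.
  apply/setP=> e; rewrite !inE; case: (eqVneq (endA e) a1) => [->|] //=.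
  by rewrite (negbTE a12) !andbF.
have -> : edges_at y = parallel a1 y :|: parallel a2 y.
  apply/setP=> e; rewrite !inE inc_endB //.
  by have := endA_in e; rewrite eA !inE; case: (endB e == y); rewrite ?andbF ?andbT.
by rewrite cardsU disj cards0 subn0.
Qed.

Hypothesis connG : connected eu ev.

Lemma card_parallel_neq3 x y : 2 < #|V| -> x \in A -> y \notin A -> #|parallel x y| != 3.
Proof.
move=> V_gt2 xA yB; apply/eqP=> par3.
have par_x : parallel x y = edges_at x.
  apply/eqP; rewrite eqEcard card_edges_at // par3 leqnn andbT.
  by apply/subsetP=> e; rewrite !inE inc_endA // => /andP[-> _].
have par_y : parallel x y = edges_at y.
  apply/eqP; rewrite eqEcard card_edges_at // par3 leqnn andbT.
  by apply/subsetP=> e; rewrite !inE inc_endB // => /andP[_ ->].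
have nbr_x v : adj x v -> v = y.
  rewrite adj_endAB // => /existsP[e /andP[eAx /eqP <-]].
  have : e \in edges_at x by rewrite inE inc_endA.
  by rewrite -par_x inE => /andP[_ /eqP].
have nbr_y v : adj v y -> v = x.
  move=> vy; have vA : v \in A by apply: (subsetP (nbr_in yB)); rewrite inE adj_sym.
  move: vy; rewrite adj_endAB // => /existsP[e /andP[/eqP <- eBy]].
  have : e \in edges_at y by rewrite inE inc_endB.
  by rewrite -par_y inE => /andP[/eqP].
have closed_xy : closed adj [set x; y].
  move=> u v uv; rewrite !inE.
  have [eux|ux] := eqVneq u x; first by subst u; rewrite (nbr_x v uv) eqxx orbT.
  have [euy|uy] := eqVneq u y.
    by subst u; rewrite adj_sym in uv; rewrite (nbr_y v uv) eqxx.
  have [evx|vx] := eqVneq v x.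
    by subst v; rewrite adj_sym in uv; move: uy; rewrite (nbr_x u uv) eqxx.
  have [evy|vy] := eqVneq v y => //.
  by subst v; move: ux; rewrite (nbr_y u uv) eqxx.
have : #|[set: V]| <= #|[set x; y]|.
  apply/subset_leq_card/subsetP=> z _.
  by rewrite -(closed_connect closed_xy (connG x z)) set21.
by rewrite cardsT; move: V_gt2 (cards2 x y); case: (x != y); lia.
Qed.

Lemma is_C4_of_parallel a1 a2 b b' :
    A = [set a1; a2] -> ~: A = [set b; b'] -> a1 != a2 -> b != b' ->
    #|parallel a1 b| = 2 -> #|parallel a1 b'| = 1 ->
    #|parallel a2 b| = 1 -> #|parallel a2 b'| = 2 ->
  is_C4 eu ev.
Proof.
move=> eA eB a12 bb' /eqP/cards2P[d1 [d1' [d11' e11]]] /eqP/cards1P[f12 e12].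
move=> /eqP/cards1P[f21 e21] /eqP/cards2P[d2 [d2' [d22' e22]]].
have a1A : a1 \in A by rewrite eA set21.
have a2A : a2 \in A by rewrite eA set22.
have bB : b \notin A by rewrite -in_setC eB set21.
have b'B : b' \notin A by rewrite -in_setC eB set22.
have neqAB x y : x \in A -> y \notin A -> (x == y) = false.
  by move=> xA yB; apply/negbTE; apply: contraNneq yB => <-.
have d1P : d1 \in parallel a1 b by rewrite e11 set21.
have d1'P : d1' \in parallel a1 b by rewrite e11 set22.
have f12P : f12 \in parallel a1 b' by rewrite e12 set11.
have f21P : f21 \in parallel a2 b by rewrite e21 set11.
have d2P : d2 \in parallel a2 b' by rewrite e22 set21.
have d2'P : d2' \in parallel a2 b' by rewrite e22 set22.
have cardE : #|E| = 6.
  have := card_edges_endA [set: E] (subxx A).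
  rewrite (eq_bigr (fun _ => 3)) // sum_nat_const eA cards2 a12 -eA.
  have -> : [set e in [set: E] | endA e \in A] = [set: E].
    by apply/setP=> e; rewrite !inE endA_in.
  by rewrite cardsT.
(* The vertices a1, b, a2, b' and edges d1, d1', f21, d2, d2', f12 are listed in the
   order of the labels 0..3 and 0..5 of C4_u / C4_v. *)
pose gV (i : 'I_4) := nth a1 [:: a1; b; a2; b'] i.
pose fV x : 'I_4 := inord ((x \notin A) + 2 * ((x != a1) && (x != b))).
pose gE (i : 'I_6) := nth d1 [:: d1; d1'; f21; d2; d2'; f12] i.
pose fE e : 'I_6 :=
  inord (if endA e == a1 then (if endB e == b then nat_of_bool (e != d1) else 5)
         else (if endB e == b then 2 else 3 + (e != d2))).
apply: (@mg_iso_of_cancel _ _ _ _ _ _ _ _ gV fV gE fE).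
- case=> -[|[|[|[|//]]]] i4; apply: val_inj;
    rewrite /fV /gV /= inordK; try by case: (_ \in A); case: (_ && _).
  + by rewrite a1A eqxx.
  + by rewrite (negbTE bB) eqxx andbF.
  + by rewrite a2A eq_sym (negbTE a12) neqAB.
  + by rewrite (negbTE b'B) eq_sym neqAB // eq_sym (negbTE bb').
- case=> -[|[|[|[|[|[|//]]]]]] i6; apply: val_inj; rewrite /fE /gE /= inordK;
    try by case: ifP => _; case: ifP => _; try case: (_ != _).
  + by case/parallelP: d1P => -> ->; rewrite !eqxx.
  + by case/parallelP: d1'P => -> ->; rewrite !eqxx eq_sym d11'.
  + by case/parallelP: f21P => -> ->; rewrite eqxx eq_sym (negbTE a12).
  + case/parallelP: d2P => -> ->.
    by rewrite eq_sym (negbTE a12) eq_sym (negbTE bb') eqxx.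
  + case/parallelP: d2'P => -> ->.
    by rewrite eq_sym (negbTE a12) eq_sym (negbTE bb') eq_sym (negbTE d22').
  + by case/parallelP: f12P => -> ->; rewrite eqxx eq_sym (negbTE bb').
- by rewrite card_ord -(cardsC A) eB eA !cards2 a12 bb'.
- by rewrite card_ord.
case=> -[|[|[|[|[|[|//]]]]]] i6; rewrite /gE /gV /C4_u /C4_v /= !inordK //=.
all: first [by apply: ends_parallel | by rewrite ends_sym; apply: ends_parallel].
Qed.

Lemma is_C4_of_card2 : #|A| = 2 -> #|~: A| = 2 -> is_C4 eu ev.
Proof.
move=> /eqP/cards2P[a1 [a2 [a12 eA]]] /eqP/cards2P[b1 [b2 [b12 eB]]].
have V_gt2 : 2 < #|V| by rewrite -(cardsC A) eB eA !cards2 a12 b12.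
have a1A : a1 \in A by rewrite eA set21.
have a2A : a2 \in A by rewrite eA set22.
have b1B : b1 \notin A by rewrite -in_setC eB set21.
have b2B : b2 \notin A by rewrite -in_setC eB set22.
have /eqP n11 := card_parallel_neq3 V_gt2 a1A b1B.
have /eqP n12 := card_parallel_neq3 V_gt2 a1A b2B.
have r1 := card_parallel_row a1A eB b12; have r2 := card_parallel_row a2A eB b12.
have k1 := card_parallel_col b1B eA a12; have k2 := card_parallel_col b2B eA a12.
have [m11|m11] : #|parallel a1 b1| = 2 \/ #|parallel a1 b1| = 1 by lia.
  by apply: (is_C4_of_parallel eA eB) => //; lia.
by apply: (is_C4_of_parallel eA (etrans eB (setUC _ _))) => //; [rewrite eq_sym | lia..].
Qed.

End SmallBraces.

End Bipartite.

Lemma rho_all_matchable (V E : finType) (eu ev : E -> V) (A : {set V}) :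
    (forall a b, a \in A -> b \notin A -> lambda_matchable eu ev a b) ->
  rho eu ev A = #|A| * #|~: A|.
Proof.
move=> lm; rewrite /rho -cardsX; apply: eq_card => -[x y]; rewrite !inE /=.
by case: (boolP (x \in A)) => xA; case: (boolP (y \in A)) => yB //=; rewrite lm.
Qed.

Theorem proposition1p21 (V E : finType) (eu ev : E -> V) (A : {set V}) :
  loopless eu ev -> cubic eu ev -> brace eu ev A -> ~ is_C4 eu ev ->
  (forall a b, a \in A -> b \notin A -> lambda_matchable eu ev a b) /\
  (~ is_Theta eu ev -> rho eu ev A = beta_prime_brace V).
Proof.
move=> _ cubicG [bipA [connG V_gt1 [M pmM] _] tight_free] notC4.
have balanced := pm_balanced bipA pmM.
have cardV : #|V| = #|A| + #|A| by rewrite -(cardsC A) balanced.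
have [A_small|A_large] := ltnP #|A| 3.
  have [A0|[A1|A2]] : #|A| = 0 \/ #|A| = 1 \/ #|A| = 2 by lia.
  - by move: V_gt1; rewrite cardV A0.
  - split=> [a b aA bB|notTheta].
      by apply: (lambda_matchable_of_card1 (A := A)); rewrite ?balanced.
    by exfalso; apply: notTheta; apply: (is_Theta_of_card1 bipA); rewrite ?balanced.
  - by exfalso; apply: notC4; apply: (is_C4_of_card2 bipA); rewrite ?balanced.
have lm := lambda_matchable_brace bipA tight_free balanced cubicG A_large.
split=> // _; rewrite rho_all_matchable // balanced /beta_prime_brace cardV.
by rewrite ifT ?addnn -?muln2 ?mulnK //; lia.
Qed.
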